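(* Let $l^1,\dots,l^T\in[0,1]^N$ be an arbitrary (adversarial) sequence of loss vectors, let $w^1\in\Delta^N$ have all entries positive, let $0<\eta<1$, and define $$w^{t+1}=w^t\odot\big(\mathbb{1}-\eta\,\Pi_{w^t} l^t\big),\qquad (\Pi_{w^t}l^t)_i=l^t_i-w^t\cdot l^t.$$ Then for every $u\in\Delta^N$, $$\sum_{t=1}^T w^t\cdot l^t-\sum_{t=1}^T u\cdot l^t\le \frac{D(u\,|\,w^1)}{\eta}+\frac{T\eta}{2(1-\eta)}.$$ In particular, taking $w^1=(1/N,\ldots,1/N)$ and $\eta=\frac{\sqrt{2\log N}}{\sqrt{2\log N}+\sqrt{T}}$ gives, for every $u\in\Delta^N$, $$\sum_{t=1}^T w^t\cdot l^t-\sum_{t=1}^T u\cdot l^t\le\sqrt{2T\log N}+\log N,$$ and this holds in particular for $u=e_j$, where $j$ is the best expert (minimizing $\sum_t l^t_j$) and $e_j$ is the standard basis vector.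
   Context: $\Delta^N=\{w\in\mathbb{R}^N : \sum_i w_i=1,\ w_i\ge 0\}$; $\odot$ is componentwise multiplication and $\mathbb{1}$ the all-ones vector. The relative entropy is $D(u\,|\,w)=\sum_{i:\,u_i\ne0}u_i\log(u_i/w_i)$. *)

From HB Require Import structures.
From mathcomp Require Import all_boot all_order all_algebra.
From mathcomp Require Import reals exp.
Set Implicit Arguments. Unset Strict Implicit. Unset Printing Implicit Defensive.
Import Order.TTheory GRing.Theory Num.Theory.
Local Open Scope ring_scope.

Definition in_simplex (R : realType) (N : nat) (w : 'I_N -> R) : Prop :=
  (forall i, 0 <= w i) /\ \sum_(i < N) w i = 1.

Definition dotv (R : realType) (N : nat) (u w : 'I_N -> R) : R :=
  \sum_(i < N) u i * w i.

Definition relent (R : realType) (N : nat) (u w : 'I_N -> R) : R :=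
  \sum_(i < N | u i != 0) u i * ln (u i / w i).

Definition mw_step (R : realType) (N : nat) (eta : R) (w l : 'I_N -> R)
  : 'I_N -> R :=
  fun i => w i * (1 - eta * (l i - dotv w l)).

(* weights L w1 eta t = w^{t+1}, i.e. 0-based: weights 0 = w^1, and the
   loss vector l^{t+1} is L t. *)
Fixpoint weights (R : realType) (N : nat) (eta : R) (w1 : 'I_N -> R)
  (L : nat -> 'I_N -> R) (t : nat) : 'I_N -> R :=
  match t with
  | 0 => w1
  | t'.+1 => mw_step eta (weights eta w1 L t') (L t')
  end.

Definition regret (R : realType) (N : nat) (eta : R) (w1 : 'I_N -> R)
  (L : nat -> 'I_N -> R) (T : nat) (u : 'I_N -> R) : R :=
  \sum_(t < T) dotv (weights eta w1 L t) (L t) - \sum_(t < T) dotv u (L t).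

Definition uniformw (R : realType) (N : nat) : 'I_N -> R := fun _ => N%:R^-1.

Definition basisv (R : realType) (N : nat) (j : 'I_N) : 'I_N -> R :=
  fun i => if i == j then 1 else 0.

From HB Require Import structures.
From mathcomp Require Import all_boot all_order all_algebra.
From mathcomp Require Import classical_sets reals topology normedtype derive realfun exp.
From mathcomp Require Import ring lra.
Set Implicit Arguments. Unset Strict Implicit. Unset Printing Implicit Defensive.
Import Order.TTheory GRing.Theory Num.Theory.
Import numFieldNormedType.Exports.
Local Open Scope ring_scope.

(* The relative entropy D(u | w^t) is a potential.  Writing
   w^{t+1}_i = w^t_i (1 - eta x_i) with x_i = l^t_i - w^t . l^t in [-1, 1],
   one round lowers it by - sum_i u_i ln (1 - eta x_i), and the elementary bound
   ln (1 - eta x) >= - eta x - eta^2 / (2 (1 - eta)) turns this drop into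
   at least eta (w^t . l^t - u . l^t) - eta^2 / (2 (1 - eta)), because
   sum_i u_i x_i = u . l^t - w^t . l^t.  Summing over the rounds the potential
   telescopes, and it is nonnegative at the end.  The elementary bound is
   ln y >= (y - 1) - (y - 1)^2 / (2 a) for y >= a, a in (0, 1]: the
   difference of the two sides has derivative (y - 1) (y - a) / (a y) on
   [a, +oo), so it is smallest, namely 0, at y = 1.  Finally
   D(u | uniform) <= ln N, and the tuned rate balances ln N / eta against
   T eta / (2 (1 - eta)). *)

Section LnLowerBound.
Variable R : realType.

Lemma derive1_sign_min (f : R -> R) (a m x : R) : a <= m -> a <= x ->
  (forall y, a <= y -> derivable f y 1) ->
  (forall y, a <= y -> 0 <= (y - m) * derive1 f y) -> f m <= f x.
Proof.
move=> am ax df sgf.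
have cf (b c : R) : a <= b -> {within `[b, c], continuous f}%classic.
  move=> ab; apply: derivable_within_continuous => y.
  by rewrite in_itv /= => /andP[bz _]; apply: df; apply: le_trans bz.
have [mx|xm] := leP m x.
- apply: (ger0_derive1_le_cc _ _ (cf _ x am)); rewrite ?in_itv /= ?lexx ?mx //.
  + by move=> y; rewrite in_itv /= => /andP[my _]; apply: df; lra.
  + move=> y; rewrite in_itv /= => /andP[my _].
    by rewrite -(pmulr_rge0 _ (_ : 0 < y - m)) ?sgf; lra.
- apply: (ler0_derive1_le_cc (a := x) (b := m) _ _ (cf _ m ax));
    rewrite ?in_itv /= ?lexx ?ltW //.
  + by move=> y; rewrite in_itv /= => /andP[xy _]; apply: df; lra.
  + move=> y; rewrite in_itv /= => /andP[xy ym].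
    by rewrite -(nmulr_rge0 _ (_ : y - m < 0)) ?sgf; lra.
Qed.

Lemma ln_ge_quadratic (a y : R) : 0 < a <= 1 -> a <= y ->
  (y - 1) - (y - 1) ^+ 2 / (2 * a) <= ln y.
Proof.
move=> /andP[a0 a1] ay.
pose f z := ln z - (z - 1) + (z - 1) ^+ 2 / (2 * a).
have f_derive (x : R) : 0 < x -> is_derive x 1 f (x^-1 - 1 + (x - 1) / a).
  move=> x0; have ln_derive := is_derive1_ln x0.
  by apply: is_derive_eq; rewrite /GRing.scale /=; field; rewrite !gt_eqF.
have : f 1 <= f y.
  apply: (derive1_sign_min (a := a)) => // z az;
    have f'z := f_derive z (lt_le_trans a0 az).
  - exact: ex_derive.
  - rewrite derive1E derive_val.
    have -> : (z - 1) * (z^-1 - 1 + (z - 1) / a) = (z - 1) ^+ 2 * (z - a) / (a * z).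
      by field; rewrite !gt_eqF //; lra.
    have z0 : 0 < z by lra.
    apply: divr_ge0; last by rewrite mulr_ge0 // ltW.
    by rewrite mulr_ge0 ?sqr_ge0 // subr_ge0.
by rewrite /f /= subrr expr0n /= mul0r addr0 subr0 (@ln1 R); lra.
Qed.

Lemma ln_mw_factor_ge (eta x : R) : 0 < eta < 1 -> -1 <= x <= 1 ->
  - x <= ln (1 - eta * x) / eta + eta / (2 * (1 - eta)).
Proof.
move=> /andP[e0 e1] /andP[x_ge x_le].
have ln_ge : - (eta * x) - (eta * x) ^+ 2 / (2 * (1 - eta)) <= ln (1 - eta * x).
  have := @ln_ge_quadratic (1 - eta) (1 - eta * x).
  have -> : 1 - eta * x - 1 = - (eta * x) by ring.
  rewrite sqrrN.
  by apply; [apply/andP; split; lra | nra].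
have sq_le : (eta * x) ^+ 2 / (2 * (1 - eta)) <= eta ^+ 2 / (2 * (1 - eta)).
  apply: ler_wpM2r; first by rewrite invr_ge0; lra.
  by rewrite exprMn ler_piMr ?sqr_ge0 //; nra.
have -> : ln (1 - eta * x) / eta + eta / (2 * (1 - eta)) =
          (ln (1 - eta * x) + eta ^+ 2 / (2 * (1 - eta))) / eta.
  by field; apply/andP; split; lra.
rewrite ler_pdivlMr //; lra.
Qed.
End LnLowerBound.

Section MultiplicativeWeights.
Variables (R : realType) (N : nat).
Implicit Types (u w l : 'I_N -> R) (eta : R).

Lemma dotv_ge0_le1 w l : in_simplex w -> (forall i, 0 <= l i <= 1) ->
  0 <= dotv w l <= 1.
Proof.
move=> [w_ge0 w_sum1] l01; apply/andP; split.
  by apply: sumr_ge0 => i _; rewrite mulr_ge0 //; case/andP: (l01 i).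
rewrite -w_sum1; apply: ler_sum => i _; rewrite ler_piMr //.
by case/andP: (l01 i).
Qed.

Lemma mw_factor_gt0 eta w l : 0 < eta < 1 -> in_simplex w ->
  (forall i, 0 <= l i <= 1) -> forall i, 0 < 1 - eta * (l i - dotv w l).
Proof.
move=> /andP[e0 e1] w_simplex l01 i.
have /andP[d0 d1] := dotv_ge0_le1 w_simplex l01.
have /andP[l0 l1] := l01 i.
nra.
Qed.

Lemma sum_mw_step eta w l : \sum_i w i = 1 -> \sum_i mw_step eta w l i = 1.
Proof.
move=> w_sum1; rewrite /mw_step.
under eq_bigr => i _ do rewrite mulrBr mulr1 mulrCA mulrBr.
by rewrite sumrB -mulr_sumr sumrB -mulr_suml w_sum1 mul1r /dotv subrr mulr0 subr0.
Qed.

Lemma mw_step_simplex eta w l : 0 < eta < 1 ->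
  in_simplex w -> (forall i, 0 < w i) -> (forall i, 0 <= l i <= 1) ->
  in_simplex (mw_step eta w l) /\ (forall i, 0 < mw_step eta w l i).
Proof.
move=> eta01 w_simplex w_gt0 l01.
have step_gt0 i : 0 < mw_step eta w l i.
  by rewrite mulr_gt0 ?mw_factor_gt0.
split=> //; split; first by move=> i; exact: ltW.
by rewrite sum_mw_step //; case: w_simplex.
Qed.

Lemma weights_simplex eta w1 (L : nat -> 'I_N -> R) T :
  0 < eta < 1 -> in_simplex w1 -> (forall i, 0 < w1 i) ->
  (forall t i, (t < T)%N -> 0 <= L t i <= 1) ->
  forall t, (t <= T)%N ->
    in_simplex (weights eta w1 L t) /\ (forall i, 0 < weights eta w1 L t i).
Proof.
move=> eta01 w1_simplex w1_gt0 L01; elim=> [|t IH] tT //=.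
have [wt_simplex wt_gt0] := IH (ltnW tT).
by apply: mw_step_simplex => // i; apply: L01.
Qed.

Lemma relent_mul u w (f : 'I_N -> R) :
  (forall i, 0 <= u i) -> (forall i, 0 < w i) -> (forall i, 0 < f i) ->
  relent u w - relent u (fun i => w i * f i) = \sum_i u i * ln (f i).
Proof.
move=> u_ge0 w_gt0 f_gt0; rewrite /relent -sumrB big_mkcond /=.
apply: eq_bigr => i _; case: eqVneq => [->|ui_neq0] /=; first by rewrite mul0r.
have ui_gt0 : 0 < u i by rewrite lt_def ui_neq0 u_ge0.
rewrite -mulrBr invfM mulrA [ln (_ / f i)]ln_div ?posrE ?divr_gt0 //.
by congr (_ * _); ring.
Qed.

Lemma relent_ge0 u w : in_simplex u -> in_simplex w -> (forall i, 0 < w i) ->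
  0 <= relent u w.
Proof.
move=> [u_ge0 u_sum1] [_ w_sum1] w_gt0.
rewrite -(subrr 1) -{1}u_sum1 -w_sum1 -sumrB /relent [leRHS]big_mkcond /=.
apply: ler_sum => i _; case: eqVneq => [->|ui_neq0] /=; first by rewrite sub0r oppr_le0 ltW.
have ui_gt0 : 0 < u i by rewrite lt_def ui_neq0 u_ge0.
have wu_gt0 : 0 < w i / u i by rewrite divr_gt0.
have ln_le : ln (w i / u i) <= w i / u i - 1.
  by have := @le_ln1Dx R (w i / u i - 1); rewrite addrCA subrr addr0; apply; lra.
rewrite -[u i / w i]invf_div lnV ?posrE //.
have -> : u i - w i = u i * (1 - w i / u i) by rewrite mulrBr mulr1 mulrCA divff ?mulr1.
by rewrite ler_pM2l //; lra.
Qed.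

Lemma relent_uniform_le u : in_simplex u -> relent u (@uniformw R N) <= ln N%:R.
Proof.
move=> [u_ge0 u_sum1].
have u_le1 i : u i <= 1 by rewrite -u_sum1 (bigD1 i) //= lerDl sumr_ge0.
have -> : ln N%:R = \sum_i u i * ln N%:R :> R by rewrite -mulr_suml u_sum1 mul1r.
rewrite /relent big_mkcond /=.
apply: ler_sum => i _; case: eqVneq => [->|ui_neq0] /=; first by rewrite mul0r.
have ui_gt0 : 0 < u i by rewrite lt_def ui_neq0 u_ge0.
have N_gt0 : (0 : R) < N%:R by rewrite ltr0n (leq_ltn_trans _ (ltn_ord i)).
rewrite ler_pM2l // /uniformw invrK ler_ln ?posrE ?mulr_gt0 //.
exact: ler_piMl (ltW N_gt0) (u_le1 i).
Qed.

Lemma mw_step_regret eta w l u : 0 < eta < 1 ->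
  in_simplex w -> (forall i, 0 < w i) -> (forall i, 0 <= l i <= 1) ->
  in_simplex u ->
  dotv w l - dotv u l <=
    (relent u w - relent u (mw_step eta w l)) / eta + eta / (2 * (1 - eta)).
Proof.
move=> eta01 w_simplex w_gt0 l01 [u_ge0 u_sum1].
have factor_gt0 := mw_factor_gt0 eta01 w_simplex l01.
rewrite /mw_step relent_mul //.
set K := eta / (2 * (1 - eta)).
have -> : dotv w l - dotv u l = \sum_i u i * - (l i - dotv w l).
  under eq_bigr do rewrite opprB mulrBr.
  by rewrite sumrB -mulr_suml u_sum1 mul1r.
have -> : K = \sum_i u i * K by rewrite -mulr_suml u_sum1 mul1r.
rewrite mulr_suml -big_split /=; apply: ler_sum => i _.
rewrite -mulrA -mulrDr ler_wpM2l // ln_mw_factor_ge //.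
have /andP[l0 l1] := l01 i; have /andP[d0 d1] := dotv_ge0_le1 w_simplex l01.
by apply/andP; split; lra.
Qed.

Lemma mw_regret_bound eta w1 (L : nat -> 'I_N -> R) T u :
  0 < eta < 1 -> in_simplex w1 -> (forall i, 0 < w1 i) ->
  (forall t i, (t < T)%N -> 0 <= L t i <= 1) -> in_simplex u ->
  regret eta w1 L T u <= relent u w1 / eta + T%:R * eta / (2 * (1 - eta)).
Proof.
move=> eta01 w1_simplex w1_gt0 L01 u_simplex.
have w_simplex := weights_simplex eta01 w1_simplex w1_gt0 L01.
pose D t := relent u (weights eta w1 L t).
have telescope : \sum_(t < T) (D t - D t.+1) = D 0%N - D T.
  have := telescope_sumr_eq (fun t => - D t) (fun t => D t - D t.+1) (leq0n T).
  by rewrite big_mkord opprK addrC; apply=> t _; rewrite opprK addrC.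
apply: (@le_trans _ _ (\sum_(t < T) ((D t - D t.+1) / eta + eta / (2 * (1 - eta))))).
  rewrite /regret -sumrB; apply: ler_sum => t _.
  have [wt_simplex wt_gt0] := w_simplex t (ltnW (ltn_ord t)).
  exact: mw_step_regret (fun i => L01 t i (ltn_ord t)) u_simplex.
have [wT_simplex wT_gt0] := w_simplex T (leqnn T).
rewrite big_split /= -mulr_suml telescope sumr_const card_ord -(mulr_natl (eta / _)) mulrA.
have eta_gt0 : 0 < eta by case/andP: eta01.
by rewrite lerD2r ler_pM2r ?invr_gt0 // /D /= gerBl relent_ge0.
Qed.

End MultiplicativeWeights.

Lemma uniformw_simplex (R : realType) (N : nat) : (0 < N)%N ->
  in_simplex (@uniformw R N) /\ (forall i, 0 < @uniformw R N i).
Proof.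
move=> N_gt0; have unif_gt0 i : 0 < @uniformw R N i by rewrite invr_gt0 ltr0n.
split=> //; split=> [i|]; first exact: ltW.
by rewrite sumr_const card_ord -(mulr_natr (N%:R^-1)) mulVf // pnatr_eq0 -lt0n.
Qed.

Lemma basisv_simplex (R : realType) (N : nat) (j : 'I_N) : in_simplex (@basisv R N j).
Proof.
split=> [i|]; first by rewrite /basisv; case: eqP.
by rewrite (bigD1 j) //= /basisv eqxx big1 ?addr0 // => i /negbTE ->.
Qed.

Lemma one_expert_regret (R : realType) (eta : R) (L : nat -> 'I_1 -> R) T u :
  in_simplex u -> regret eta (@uniformw R 1) L T u = 0.
Proof.
move=> [_]; rewrite big_ord1 => u_eq1.
have w_eq1 t : weights eta (@uniformw R 1) L t ord0 = 1.
  elim: t => [|t IH] /=; first by rewrite /uniformw invr1.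
  by rewrite /mw_step /dotv big_ord1 IH !mul1r subrr mulr0 subr0.
rewrite /regret -sumrB big1 // => t _.
by rewrite /dotv !big_ord1 w_eq1 u_eq1 subrr.
Qed.

Definition tuned_rate (R : realType) (N T : nat) : R :=
  Num.sqrt (2 * ln N%:R) / (Num.sqrt (2 * ln N%:R) + Num.sqrt T%:R).

Lemma tuned_rate_balance (R : realType) (a b : R) : 0 < a -> 0 < b ->
  (a ^+ 2 / 2) / (a / (a + b)) + b ^+ 2 * (a / (a + b)) / (2 * (1 - a / (a + b)))
  = a ^+ 2 / 2 + a * b.
Proof.
move=> a_gt0 b_gt0; field.
by rewrite addrAC subrr add0r !gt_eqF ?addr_gt0.
Qed.

Lemma uniform_regret_tuned (R : realType) (N T : nat) (L : nat -> 'I_N -> R) :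
  (forall t i, (t < T)%N -> 0 <= L t i <= 1) ->
  forall u, in_simplex u ->
  regret (tuned_rate R N T) (@uniformw R N) L T u
    <= Num.sqrt (2 * T%:R * ln N%:R) + ln N%:R.
Proof.
(* For N = 1 or T = 0 the tuned rate is 0 or 1, outside the range of mw_regret_bound. *)
case: N L => [|[|n]] L L01 u u_simplex.
- by case: u_simplex => _; rewrite big_ord0 => /eqP; rewrite eq_sym oner_eq0.
- by rewrite one_expert_regret // -[1%:R]/(1 : R) ln1 mulr0 sqrtr0 addr0.
case: T L L01 => [|T] L L01.
  by rewrite /regret !big_ord0 subrr addr_ge0 ?sqrtr_ge0 ?ln_ge0 ?ler1n.
have lnN_gt0 : 0 < ln (n.+2%:R : R) by rewrite ln_gt0 ?ltr1n.
rewrite /tuned_rate; set a := Num.sqrt _; set b := Num.sqrt _.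
have a_gt0 : 0 < a by rewrite sqrtr_gt0 mulr_gt0.
have b_gt0 : 0 < b by rewrite sqrtr_gt0 ltr0n.
have eta01 : 0 < a / (a + b) < 1.
  by rewrite divr_gt0 ?addr_gt0 //= ltr_pdivrMr ?addr_gt0 // mul1r ltrDl.
have [unif_simplex unif_gt0] := @uniformw_simplex R n.+2 isT.
apply: le_trans (mw_regret_bound eta01 unif_simplex unif_gt0 L01 u_simplex) _.
have lnN_eq : ln (n.+2%:R : R) = a ^+ 2 / 2.
  by rewrite sqr_sqrtr ?mulr_ge0 ?ltW //; field.
have T_eq : (T.+1%:R : R) = b ^+ 2 by rewrite sqr_sqrtr ?ler0n.
have sqrt_eq : Num.sqrt (2 * T.+1%:R * ln (n.+2%:R : R)) = a * b.
  by rewrite -sqrtrM ?mulr_ge0 ?ler0n ?ltW //; congr Num.sqrt; ring.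
rewrite sqrt_eq T_eq [in X in _ <= X]lnN_eq [leRHS]addrC -tuned_rate_balance //.
by rewrite lerD2r ler_pM2r ?invr_gt0 ?divr_gt0 ?addr_gt0 // -lnN_eq relent_uniform_le.
Qed.

Theorem theorem5p1 (R : realType) (N T : nat) (L : nat -> 'I_N -> R)
  (hL : forall t i, (t < T)%N -> 0 <= L t i <= 1) :
  (forall (w1 : 'I_N -> R) (eta : R),
     in_simplex w1 -> (forall i, 0 < w1 i) -> 0 < eta < 1 ->
     forall u : 'I_N -> R, in_simplex u ->
       regret eta w1 L T u
         <= relent u w1 / eta + T%:R * eta / (2 * (1 - eta)))
  /\
  (let eta : R := Num.sqrt (2 * ln N%:R)
              / (Num.sqrt (2 * ln N%:R) + Num.sqrt T%:R) in
   (forall u : 'I_N -> R, in_simplex u ->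
      regret eta (@uniformw R N) L T u
        <= Num.sqrt (2 * T%:R * ln N%:R) + ln N%:R)
   /\
   (forall j : 'I_N,
      (forall k : 'I_N, \sum_(t < T) L t j <= \sum_(t < T) L t k) ->
      regret eta (@uniformw R N) L T (@basisv R N j)
        <= Num.sqrt (2 * T%:R * ln N%:R) + ln N%:R)).
Proof.
split=> [w1 eta w1_simplex w1_gt0 eta01 u|eta]; first exact: mw_regret_bound.
split=> [|j _]; first exact: uniform_regret_tuned.
exact/uniform_regret_tuned/basisv_simplex.
Qed.
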